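(* Let $f=\frac1n\sum_{z=1}^nf_z$ be twice differentiable, let $x_0\in\mathbb{R}^d$, $H=\nabla^2f(x_0)$, and suppose $\lambda_{\min}(H)=-\lambda<0$ with unit eigenvector $v$, and that the CNC condition holds at $x_0$: $\mathbb{E}_z[(v^T\nabla f_z(x_0))^2]\ge\tau$ for $z$ uniform on $[n]$. Let $x_1=x_0-r\nabla f_z(x_0)$ with $z$ uniform on $[n]$, let $\eta>0$, $\kappa=1+\eta\lambda$, and $u_t=(I-\eta H)^t(x_1-x_0)$. Then for every $t\ge0$, $$\mathbb{E}[\|u_t\|^2]\ge\tau r^2\kappa^{2t}.$$ *)

From HB Require Import structures.
From mathcomp Require Import all_boot all_order all_algebra.
From mathcomp Require Import all_classical all_reals all_analysis.
Set Implicit Arguments. Unset Strict Implicit. Unset Printing Implicit Defensive.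
Import Order.TTheory GRing.Theory Num.Theory.
Import numFieldNormedType.Exports.
Local Open Scope ring_scope.

Definition basis_vec (R : realType) (d : nat) (i : 'I_d) : 'cV[R]_d :=
  delta_mx i ord0.

Definition grad (R : realType) (d : nat) (f : 'cV[R]_d -> R) (x : 'cV[R]_d)
  : 'cV[R]_d := \col_i ('D_(@basis_vec R d i) f x).

Definition hessian (R : realType) (d : nat) (f : 'cV[R]_d -> R) (x : 'cV[R]_d)
  : 'M[R]_d := \matrix_(i, j) ('D_(@basis_vec R d j) (fun y => grad f y i ord0) x).

Definition twice_differentiable (R : realType) (d : nat) (f : 'cV[R]_d -> R) :=
  forall x, differentiable f x /\ differentiable (grad f) x.

Definition sqnorm (R : realType) (d : nat) (u : 'cV[R]_d) : R :=
  \sum_i (u i ord0) ^+ 2.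

Definition is_lambda_min (R : realType) (d : nat) (H : 'M[R]_d) (m : R) :=
  eigenvalue H m /\ forall mu, eigenvalue H mu -> m <= mu.

Definition avg (R : realType) (n : nat) (g : 'I_n -> R) : R :=
  n%:R^-1 * \sum_(z < n) g z.

(* Twice differentiability makes the Hessian symmetric: both mixed partials
   [D_b D_a f x] and [D_a D_b f x] are the limit of the symmetric second
   difference [f (x + h a + h b) - f (x + h a) - f (x + h b) + f x] over [h ^ 2],
   by the mean value theorem.  Hence [v] is also a left eigenvector of
   [M = I - eta H], with eigenvalue [kappa], so [v^T M^t u = kappa^t v^T u].
   For [u = x1 - x0 = - r grad f_z x0] Cauchy-Schwarz against the unit vector
   [v] gives [|M^t u|^2 >= kappa^(2t) r^2 (v^T grad f_z x0)^2], and averaging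
   over [z] yields the bound [tau r^2 kappa^(2t)]. *)

From HB Require Import structures.
From mathcomp Require Import all_boot all_order all_algebra.
From mathcomp Require Import all_classical all_reals all_analysis.
From mathcomp Require Import lra ring.
Import Order.TTheory GRing.Theory Num.Theory.
Import numFieldNormedType.Exports.
Set Implicit Arguments.
Unset Strict Implicit.
Unset Printing Implicit Defensive.

Local Open Scope ring_scope.

Section SecondDifference.
Variables (R : realType) (V : normedModType R).
Local Open Scope classical_set_scope.

Lemma differentiable_remainder_le (phi : V -> R) x : differentiable phi x ->
  forall eps, 0 < eps -> exists2 del, 0 < del & forall w, `|w| < del ->
    `|phi (w + x) - phi x - 'd phi x w| <= eps * `|w|.
Proof.
move=> /diff_locally dx eps eps0.
have /nbhs_norm0P[del del0 Hdel] := (proj1 (eqaddoP _ _ _ _) dx) eps eps0.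
by exists del => // w /Hdel /=; rewrite opprD addrA.
Qed.

Lemma is_derive_along (f : V -> R) (a y : V) (s : R) :
  differentiable f (s *: a + y) ->
  is_derive s 1 (fun t : R => f (t *: a + y)) ('D_a f (s *: a + y)).
Proof.
move=> df.
have shiftE : (fun h : R => h^-1 *: (f ((h *: 1 + s) *: a + y) - f (s *: a + y)))
    = (fun h : R => h^-1 *: (f (h *: a + (s *: a + y)) - f (s *: a + y))).
  by apply/funext => h; rewrite [h *: 1]mulr1 scalerDl addrA.
split; first by rewrite /derivable /= shiftE; exact: diff_derivable.
by rewrite /derive /= shiftE.
Qed.

(* The left-hand side is the difference of two first-order remainders of [phi]
   at [x], taken at points of norm [O(h)]. *)
Lemma increment_derive_le (phi : V -> R) (a b x : V) : differentiable phi x ->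
  forall eps, 0 < eps -> exists2 del, 0 < del & forall s h : R,
    0 < s -> s < h -> h < del ->
    `|phi (s *: a + (h *: b + x)) - phi (s *: a + x) - h * 'D_b phi x| <= eps * h.
Proof.
move=> dphi eps eps0.
set K := `|a| + `|b| + 1.
have K0 : 0 < K by rewrite /K; have := normr_ge0 a; have := normr_ge0 b; lra.
have eK0 : 0 < eps / (2 * K) by rewrite divr_gt0 // mulr_gt0.
have [del del0 Hdel] := differentiable_remainder_le dphi eK0.
exists (del / K) => [|s h s0 sh]; first exact: divr_gt0.
rewrite ltr_pdivlMr // => hK.
set L := 'd phi x.
have small w : `|w| <= h * K -> `|phi (w + x) - phi x - L w| <= eps * h / 2.
  move=> wh; apply: le_trans (Hdel _ (le_lt_trans wh hK)) _.
  apply: le_trans (ler_wpM2l (ltW eK0) wh) _.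
  by rewrite [leLHS](_ : _ = eps * h / 2) //; field; rewrite gt_eqF.
have h0 := lt_trans s0 sh.
have [nsa nb] : `|s *: a| <= h * `|a| /\ `|h *: b| = h * `|b|.
  by rewrite !normrZ !gtr0_norm // ler_wpM2r // ltW.
have hab : h * (`|a| + `|b|) <= h * K by rewrite ler_pM2l // lerDl.
have nsab : `|s *: a + h *: b| <= h * K.
  by apply: le_trans (ler_normD _ _) (le_trans _ hab); rewrite nb mulrDr lerD2r.
have nsa' : `|s *: a| <= h * K.
  by apply: le_trans nsa (le_trans _ hab); rewrite ler_pM2l // lerDl.
have LE : L (s *: a + h *: b) = L (s *: a) + h * 'D_b phi x.
  by rewrite linearD [L (h *: b)]linearZ (deriveE _ dphi).
have -> : phi (s *: a + (h *: b + x)) - phi (s *: a + x) - h * 'D_b phi x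
    = (phi ((s *: a + h *: b) + x) - phi x - L (s *: a + h *: b))
      - (phi (s *: a + x) - phi x - L (s *: a)).
  by rewrite LE addrA; ring.
apply: le_trans (ler_normB _ _) _.
by have := small _ nsab; have := small _ nsa'; lra.
Qed.

Definition second_diff (f : V -> R) (a b x : V) (h : R) :=
  f (h *: a + (h *: b + x)) - f (h *: a + x) - f (h *: b + x) + f x.

Lemma second_diffC f a b x h : second_diff f a b x h = second_diff f b a x h.
Proof. by rewrite /second_diff addrCA; ring. Qed.

(* Mean value theorem for [s |-> f (s a + h b + x) - f (s a + x) - s h c]
   on [[0, h]]. *)
Lemma second_diff_approx (f : V -> R) (a b x : V) :
  (forall y, differentiable f y) -> differentiable ('D_a f) x ->
  forall eps, 0 < eps -> exists2 del, 0 < del & forall h : R, 0 < h -> h < del ->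
    `|second_diff f a b x h - h ^+ 2 * 'D_b ('D_a f) x| <= eps * h ^+ 2.
Proof.
move=> df dDa eps eps0.
have [del del0 Hdel] := increment_derive_le a b dDa eps0.
exists del => // h h0 hdel.
set c := 'D_b ('D_a f) x.
pose k s := f (s *: a + (h *: b + x)) - f (s *: a + x) - h * c * s.
pose dk s := 'D_a f (s *: a + (h *: b + x)) - 'D_a f (s *: a + x) - h * c.
have kd (s : R) : is_derive s 1 k (dk s).
  apply: is_deriveB; first by apply: is_deriveB; apply: is_derive_along.
  exact: is_derive_eq (is_deriveZ (h * c) (is_derive_id s 1)) (mulr1 _).
have kc : {within `[0, h], continuous k}.
  by apply: derivable_within_continuous => s _; exact: ex_derive.
have [xi /[!in_itv] /andP[xi0 xih] kE] := MVT h0 (fun s _ => kd s) kc.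
have -> : second_diff f a b x h - h ^+ 2 * c = k h - k 0.
  by rewrite /second_diff /k !scale0r !add0r; ring.
rewrite kE subr0 normrM (gtr0_norm h0) expr2 mulrA ler_pM2r //.
exact: Hdel.
Qed.

Lemma derive_comm (f : V -> R) (a b x : V) :
  (forall y, differentiable f y) ->
  differentiable ('D_a f) x -> differentiable ('D_b f) x ->
  'D_b ('D_a f) x = 'D_a ('D_b f) x.
Proof.
move=> df dDa dDb.
apply/eqP; rewrite -subr_eq0 -normr_le0; apply/ler_addgt0Pr => e e0.
rewrite add0r; have e20 : 0 < e / 2 by rewrite divr_gt0.
have [d1 d10 H1] := second_diff_approx b df dDa e20.
have [d2 d20 H2] := second_diff_approx a df dDb e20.
set h := Num.min d1 d2 / 2.
have m0 : 0 < Num.min d1 d2 by rewrite lt_min d10.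
have h0 : 0 < h by rewrite divr_gt0.
have /andP[hd1 hd2] : (h < d1) && (h < d2) by rewrite -lt_min /h; lra.
have := H2 h h0 hd2; have := H1 h h0 hd1; rewrite second_diffC.
set D := second_diff _ _ _ _ _; set c1 := 'D_b _ x; set c2 := 'D_a _ x.
move=> B1 B2.
have E : (D - h ^+ 2 * c2) - (D - h ^+ 2 * c1) = h ^+ 2 * (c1 - c2) by ring.
have : `|h ^+ 2 * (c1 - c2)| <= e / 2 * h ^+ 2 + e / 2 * h ^+ 2.
  by rewrite -E; apply: le_trans (ler_normB _ _) (lerD B2 B1).
rewrite normrM ger0_norm ?sqr_ge0 // -mulrDl -splitr [h ^+ 2 * _]mulrC.
by rewrite ler_pM2r // exprn_gt0.
Qed.

End SecondDifference.

Lemma grad_coord (R : realType) (d : nat) (f : 'cV[R]_d -> R) (i : 'I_d) :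
  (fun y => grad f y i ord0) = 'D_(@basis_vec R d i) f.
Proof. by apply/funext => y; rewrite mxE. Qed.

Lemma trmx_hessian (R : realType) (d : nat) (f : 'cV[R]_d -> R) (x : 'cV[R]_d) :
  (forall y, differentiable f y) -> differentiable (grad f) x ->
  (hessian f x)^T = hessian f x.
Proof.
move=> df dgrad.
have dD i : differentiable ('D_(@basis_vec R d i) f) x.
  rewrite -grad_coord.
  exact: differentiable_comp dgrad (differentiable_coord _ i ord0).
by apply/matrixP => i j; rewrite !mxE !grad_coord derive_comm.
Qed.

Lemma trmx_mulmx_exp_eigen (R : comPzRingType) (n k : nat) (A : 'M[R]_n)
    (v : 'cV[R]_n) (a : R) :
  A^T = A -> A *m v = a *: v -> v^T *m A ^+ k = a ^+ k *: v^T.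
Proof.
move=> AT Av; have vA : v^T *m A = a *: v^T by rewrite -AT -trmx_mul Av linearZ.
elim: k => [|k IH]; first by rewrite expr0 -idmxE mulmx1 scale1r.
by rewrite exprSr -mulmxE mulmxA IH -scalemxAl vA scalerA -exprSr.
Qed.

Lemma sqr_dot_le_sqnorm (R : realType) (d : nat) (u v : 'cV[R]_d) :
  sqnorm v = 1 -> ((v^T *m u) ord0 ord0) ^+ 2 <= sqnorm u.
Proof.
move=> v1; set s := (v^T *m u) ord0 ord0.
have sE : s = \sum_i v i ord0 * u i ord0.
  by rewrite /s mxE; apply: eq_bigr => i _; rewrite mxE.
have : 0 <= \sum_i (u i ord0 - s * v i ord0) ^+ 2.
  by apply: sumr_ge0 => i _; apply: sqr_ge0.
have -> : \sum_i (u i ord0 - s * v i ord0) ^+ 2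
    = sqnorm u - 2 * s * (\sum_i v i ord0 * u i ord0) + s ^+ 2 * sqnorm v.
  by rewrite /sqnorm !mulr_sumr -sumrB -big_split /=; apply: eq_bigr => i _; ring.
by rewrite -sE v1; lra.
Qed.

Lemma sqnorm_mulmx_ge (R : realType) (d : nat) (M : 'M[R]_d) (u v : 'cV[R]_d) (a : R) :
  sqnorm v = 1 -> v^T *m M = a *: v^T ->
  a ^+ 2 * ((v^T *m u) ord0 ord0) ^+ 2 <= sqnorm (M *m u).
Proof.
move=> v1 vM; apply: le_trans (sqr_dot_le_sqnorm _ v1).
set s := (v^T *m u) ord0 ord0. (* keeps [mxE] from expanding this product *)
by rewrite mulmxA vM -scalemxAl mxE exprMn.
Qed.

Lemma ler_avg (R : realType) (n : nat) (g h : 'I_n -> R) :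
  (forall z, g z <= h z) -> avg g <= avg h.
Proof.
by move=> gh; rewrite ler_wpM2l ?invr_ge0 ?ler0n // ler_sum // => z _; exact: gh.
Qed.

Lemma avgZ (R : realType) (n : nat) (c : R) (g : 'I_n -> R) :
  avg (fun z => c * g z) = c * avg g.
Proof. by rewrite /avg -mulr_sumr mulrCA. Qed.

Theorem lemma30 (R : realType) (d n : nat) (fs : 'I_n -> 'cV[R]_d -> R)
  (x0 v : 'cV[R]_d) (lambda tau r eta : R) :
  (0 < n)%N ->
  let f := fun x => avg (fun z => fs z x) in
  let H := hessian f x0 in
  twice_differentiable f ->
  (forall z, differentiable (fs z) x0) ->
  0 < lambda ->
  is_lambda_min H (- lambda) ->
  H *m v = (- lambda) *: v ->
  sqnorm v = 1 ->
  avg (fun z => ((v^T *m grad (fs z) x0) ord0 ord0) ^+ 2) >= tau ->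
  0 < eta ->
  let kappa := 1 + eta * lambda in
  forall t : nat,
    avg (fun z =>
      let x1 := x0 - r *: grad (fs z) x0 in
      sqnorm ((1%:M - eta *: H) ^+ t *m (x1 - x0)))
    >= tau * r ^+ 2 * kappa ^+ (2 * t).
Proof.
move=> _ f H df2 _ _ _ Hv v1 tau_le _ kappa t.
have HT : H^T = H := trmx_hessian (fun y => (df2 y).1) (df2 x0).2.
set M := 1%:M - eta *: H.
have MT : M^T = M by rewrite /M linearB /= trmx1 linearZ /= HT.
have Mv : M *m v = kappa *: v.
  by rewrite /M mulmxBl mul1mx -scalemxAl Hv scalerA mulrN scaleNr opprK scalerDl scale1r.
have vMt := trmx_mulmx_exp_eigen t MT Mv.
pose g z := (v^T *m grad (fs z) x0) ord0 ord0.
have C0 : 0 <= r ^+ 2 * kappa ^+ (2 * t) by rewrite mulnC exprM mulr_ge0 ?sqr_ge0.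
apply: le_trans (_ : r ^+ 2 * kappa ^+ (2 * t) * avg (fun z => g z ^+ 2) <= _).
  by rewrite [leLHS](_ : _ = r ^+ 2 * kappa ^+ (2 * t) * tau) ?ler_wpM2l //; ring.
rewrite -avgZ; apply: ler_avg => z /=.
apply: le_trans (sqnorm_mulmx_ge _ v1 vMt).
rewrite addrAC subrr add0r mulmxN -scalemxAr 2!mxE -/(g z).
by rewrite sqrrN exprMn mulnC exprM mulrAC mulrC.
Qed.
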